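(* Let $G=(V,E,w)$ be an undirected graph without self-loops, with at least two vertices, positive edge weights and conductance $\Phi_G$, and let $\mathcal{T}$ be any HC tree of $G$. Let $(A_0,A_1,\dots,A_k)$, $k\ge 0$, be the dense branch of $\mathcal{T}$, and for $1\le i\le k$ let $B_i$ be the sibling of $A_i$. Then \begin{enumerate} \item $\mathrm{cost}_G(\mathcal{T}) \ge \frac{\Phi_G}{2}\sum_{i=1}^k |A_{i-1}|\cdot\mathrm{vol}(B_i)$; \item $\mathrm{cost}_G(\mathcal{T}) \ge \frac{\Phi_G}{2}\cdot |A_k|\cdot \mathrm{vol}(A_k)$. \end{enumerate}
   Context: $d_u=\sum_v w_{uv}$, $\mathrm{vol}(S)=\sum_{u\in S}d_u$, $\mathrm{vol}(G)=\mathrm{vol}(V)$. Conductance: $\Phi_G(S)=w(S,V\setminus S)/\mathrm{vol}(S)$ and $\Phi_G=\min\{\Phi_G(S):\emptyset\ne S\subset V,\ \mathrm{vol}(S)\le\mathrm{vol}(V)/2\}$. An HC tree is a rooted binary tree whose leaves are in bijection with $V$; each node is identified with the set of vertices at the leaves of its subtree, and $|N|$ denotes the number of such vertices. $\mathrm{cost}_G(\mathcal{T})=\sum_{\{u,v\}\in E}w_{uv}|\mathsf{leaves}(\mathcal{T}[u\vee v])|$ with $u\vee v$ the lowest common ancestor. Dense branch: the path $(A_0,\dots,A_k)$ in $\mathcal{T}$ where $A_0$ is the root, each $A_{i+1}$ is the child of $A_i$ of larger volume, and $A_k$ is the node with $\mathrm{vol}(A_k)>\mathrm{vol}(G)/2$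 both of whose children have volume at most $\mathrm{vol}(G)/2$ (equivalently, the dense branch consists of all nodes of volume $>\mathrm{vol}(G)/2$). *)

From mathcomp Require Import all_boot all_order all_algebra.
Set Implicit Arguments. Unset Strict Implicit. Unset Printing Implicit Defensive.
Import Order.TTheory GRing.Theory Num.Theory.
Local Open Scope ring_scope.

(* Weighted undirected graph on a finite vertex type V, given by a weight
   function w : V -> V -> R (w u v = 0 means no edge). *)

Section Defs.
Variables (R : realFieldType) (V : finType).

Definition deg (w : V -> V -> R) (u : V) : R := \sum_(v : V) w u v.
Definition vol (w : V -> V -> R) (S : {set V}) : R := \sum_(u in S) deg w u.
Definition volG (w : V -> V -> R) : R := vol w [set: V].
Definition cutw (w : V -> V -> R) (S : {set V}) : R :=
  \sum_(u in S) \sum_(v in ~: S) w u v.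

Definition cond_set (w : V -> V -> R) (S : {set V}) : R := cutw w S / vol w S.
Definition cond_admissible (w : V -> V -> R) (S : {set V}) : bool :=
  [&& S != set0, S \proper [set: V] & vol w S <= volG w / 2%:R].
Definition is_conductance (w : V -> V -> R) (phi : R) : Prop :=
  (exists S, cond_admissible w S /\ phi = cond_set w S) /\
  (forall S, cond_admissible w S -> phi <= cond_set w S).

Inductive hctree : Type := Leaf of V | Node of hctree & hctree.

Fixpoint leaves (t : hctree) : seq V :=
  match t with Leaf x => [:: x] | Node l r => leaves l ++ leaves r end.

Definition is_hc_tree (t : hctree) : Prop := perm_eq (leaves t) (enum V).

(* |N| and vol(N) for a node N (identified with its set of leaves) *)
Definition nleaves (t : hctree) : nat := size (leaves t).
Definition tvol (w : V -> V -> R) (t : hctree) : R := \sum_(x <- leaves t) deg w x.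

Fixpoint lca_size (t : hctree) (u v : V) : nat :=
  match t with
  | Leaf _ => 1%N
  | Node l r =>
      if (u \in leaves l) && (v \in leaves l) then lca_size l u v
      else if (u \in leaves r) && (v \in leaves r) then lca_size r u v
      else size (leaves t)
  end.

(* cost_G(T) = sum over edges {u,v} of w_uv |leaves(T[u v v])|, written as
   half the sum over ordered pairs of distinct vertices *)
Definition cost (w : V -> V -> R) (t : hctree) : R :=
  2%:R^-1 * \sum_(u : V) \sum_(v : V | v != u) w u v * (lca_size t u v)%:R.

Fixpoint dense_branch (w : V -> V -> R) (t : hctree) : seq hctree :=
  if volG w / 2%:R < tvol w t then
    t :: match t with
         | Leaf _ => [::]
         | Node l r => if tvol w r <= tvol w l then dense_branch w l
                       else dense_branch w r
         end
  else [::].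

End Defs.

From mathcomp Require Import all_boot all_order all_algebra.
From mathcomp Require Import lra zify.
Import Order.TTheory GRing.Theory Num.Theory.
Local Open Scope ring_scope.

(* An edge leaving a child C of a node N of T has its lowest common ancestor at
   or above N, so it contributes at least |N| w(u,v) to 2 cost(T); if the
   children C_j of the nodes N_j are pairwise disjoint, every edge is charged at
   most once, whence sum_j |N_j| w(C_j, V \ C_j) <= 2 cost(T).  When moreover
   vol(C_j) <= vol(G)/2, the cut is at least Phi vol(C_j).  Along the dense
   branch the siblings B_i are pairwise disjoint and lighter than A_i, hence of
   volume at most vol(G)/2; the two children of A_k have volume at most vol(G)/2
   by the stopping rule of the branch, and if A_k is a leaf then Phi <= 1 and
   vol(A_k) <= 2 cost(T) suffice. *)

Set Implicit Arguments.
Unset Strict Implicit.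
Unset Printing Implicit Defensive.

Section Subtrees.
Variable V : finType.
Implicit Types s t c l r N : hctree V.

Fixpoint subtree s t : Prop :=
  s = t \/ if t is Node l r then subtree s l \/ subtree s r else False.

Definition child c N : Prop := exists s, N = Node c s \/ N = Node s c.

Definition leafset t : {set V} := [set x in leaves t].

Lemma subtree_refl t : subtree t t.
Proof. by case: t => [x|l r]; left. Qed.

Lemma subtree_trans t s u : subtree s t -> subtree u s -> subtree u t.
Proof.
elim: t => [x|l IHl r IHr] [->|Hs] Hu //; right.
by case: Hs => [Hl|Hr]; [left; exact: IHl Hl Hu | right; exact: IHr Hr Hu].
Qed.

Lemma subtree_child c N : child c N -> subtree c N.
Proof. by case=> s [->|->]; right; [left|right]; apply: subtree_refl. Qed.

Lemma subtree_leaves s t : subtree s t -> {subset leaves s <= leaves t}.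
Proof.
elim: t => [x|l IHl r IHr] [<-|] // [H|H] u Hu; rewrite /= mem_cat.
- by rewrite (IHl H u Hu).
- by rewrite (IHr H u Hu) orbT.
Qed.

Lemma subtree_nleaves s t : subtree s t -> (nleaves s <= nleaves t)%N.
Proof.
rewrite /nleaves; elim: t => [x|l IHl r IHr] [<-|] // [H|H]; rewrite /= size_cat.
- exact: leq_trans (IHl H) (leq_addr _ _).
- exact: leq_trans (IHr H) (leq_addl _ _).
Qed.

Lemma subtree_uniq s t : subtree s t -> uniq (leaves t) -> uniq (leaves s).
Proof.
elim: t => [x|l IHl r IHr] [<-|] // [H|H]; rewrite /= cat_uniq => /and3P [Ul _ Ur].
- exact: IHl.
- exact: IHr.
Qed.

Lemma nleaves_gt0 t : (0 < nleaves t)%N.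
Proof. by rewrite /nleaves; elim: t => [x|l IHl r IHr] //=; rewrite size_cat addn_gt0 IHl. Qed.

Lemma leafset_neq0 t : leafset t != set0.
Proof.
apply/set0Pn; move: (nleaves_gt0 t); rewrite /leafset /nleaves.
by case: (leaves t) => [|x s] // _; exists x; rewrite inE mem_head.
Qed.

Lemma leafset_sub s t : subtree s t -> leafset s \subset leafset t.
Proof. by move=> Hst; apply/subsetP => x; rewrite !inE; apply: subtree_leaves. Qed.

Lemma disjoint_leaves_node l r :
  uniq (leaves (Node l r)) -> [disjoint leafset l & leafset r].
Proof.
rewrite /= cat_uniq => /and3P [_ /hasPn Hlr _].
rewrite -setI_eq0 -subset0; apply/subsetP => x; rewrite !inE => /andP [Hl Hr].
by move: (Hlr x Hr); rewrite Hl.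
Qed.

Lemma disjoint_leaves_child c N s :
  uniq (leaves N) -> N = Node c s \/ N = Node s c ->
  [disjoint leafset c & leafset s].
Proof.
move=> UN [EN|EN]; rewrite EN in UN; last rewrite disjoint_sym.
all: exact: disjoint_leaves_node.
Qed.

Lemma lca_size_gt0 t u v : (0 < lca_size t u v)%N.
Proof.
elim: t => [x|l IHl r IHr] //=.
by do 2 case: ifP => _ //; exact: (nleaves_gt0 (Node l r)).
Qed.

Lemma uniq_leaves_node l r :
  uniq (leaves (Node l r)) -> uniq (leaves l) /\ uniq (leaves r).
Proof. by rewrite /= cat_uniq => /and3P []. Qed.

Lemma mem_leaves_nodeN l r u :
  uniq (leaves (Node l r)) -> u \in leaves l -> u \notin leaves r.
Proof.
move/disjoint_leaves_node/disjointFr => Dlr Hl.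
by move: (Dlr u); rewrite !inE => ->.
Qed.

(* A pair separated by a child of N is separated by N itself, so its lowest
   common ancestor lies at or above N. *)
Lemma nleaves_le_lca_size t N c u v :
  uniq (leaves t) -> subtree N t -> child c N ->
  u \in leaves c -> v \notin leaves c -> (nleaves N <= lca_size t u v)%N.
Proof.
elim: t N => [x|l IHl r IHr] N Ut; first by case=> [->|//] [s []].
have [Ul Ur] := uniq_leaves_node Ut.
have Ut' : uniq (leaves (Node r l)) by rewrite /= uniq_catC.
move=> HN Hc Hu Hv; have Hsub := subtree_nleaves HN.
case: HN => [EN|[HN|HN]]; rewrite /=.
- subst N; case: Hc => s [] [El Er]; [rewrite -El in Hu Hv|rewrite -Er in Hu Hv].
  + by rewrite (negbTE Hv) andbF (negbTE (mem_leaves_nodeN Ut Hu)).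
  + by rewrite (negbTE (mem_leaves_nodeN Ut' Hu)) (negbTE Hv) andbF.
- have Hul := subtree_leaves HN (subtree_leaves (subtree_child Hc) Hu).
  rewrite Hul (negbTE (mem_leaves_nodeN Ut Hul)) /=.
  by case: ifP => // _; apply: IHl.
- have Hur := subtree_leaves HN (subtree_leaves (subtree_child Hc) Hu).
  rewrite Hur (negbTE (mem_leaves_nodeN Ut' Hur)) /=.
  by case: ifP => // _; apply: IHr.
Qed.

End Subtrees.

Section DenseBranch.
Variables (R : realFieldType) (V : finType) (w : V -> V -> R).
Implicit Types t c l r N : hctree V.

Definition heavy_child t : hctree V :=
  if t is Node l r then (if tvol w r <= tvol w l then l else r) else t.

Lemma subtree_heavy_child t : subtree (heavy_child t) t.
Proof.
case: t => [x|l r]; first exact: subtree_refl.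
by right; rewrite /heavy_child; case: ifP => _; [left|right]; apply: subtree_refl.
Qed.

Lemma tvol_node l r : tvol w (Node l r) = tvol w l + tvol w r.
Proof. by rewrite /tvol /= big_cat. Qed.

Lemma tvol_le_heavy_child c N s :
  N = Node c s \/ N = Node s c -> tvol w s <= tvol w (heavy_child N).
Proof.
by case=> ->; rewrite /=; case: ifP => H //; rewrite ltW // ltNge H.
Qed.

Definition dense_tail t : seq (hctree V) :=
  if t is Node _ _ then dense_branch w (heavy_child t) else [::].

Lemma dense_branchE t : dense_branch w t =
  if volG w / 2%:R < tvol w t then t :: dense_tail t else [::].
Proof. by case: t => [x|l r] //=; case: (tvol w r <= tvol w l). Qed.

Lemma dense_branch_cons t t' s :
  dense_branch w t = t' :: s -> t' = t /\ s = dense_tail t.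
Proof. by rewrite dense_branchE; case: ltP => // _ [-> ->]. Qed.

Lemma dense_branch_nil t : dense_branch w t = [::] -> tvol w t <= volG w / 2%:R.
Proof. by rewrite dense_branchE; case: ltP. Qed.

Lemma dense_tail_cons t t' s : dense_tail t = t' :: s -> t' = heavy_child t.
Proof. by case: t => [x|l r] //= /dense_branch_cons []. Qed.

Lemma drop_dense_branch d t i : (i < size (dense_branch w t))%N ->
  drop i.+1 (dense_branch w t) = dense_tail (nth d (dense_branch w t) i).
Proof.
elim: i t => [|i IH] t; rewrite dense_branchE; case: ltP => //= _.
  by rewrite drop0.
case: t => [x|l r] //= Hi; exact: IH.
Qed.

Lemma dense_branch_mkseq t k (A : nat -> hctree V) :
  dense_branch w t = mkseq A k.+1 ->
  [/\ A 0%N = t, forall i, (i < k)%N -> A i.+1 = heavy_child (A i)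
    & forall l r, A k = Node l r -> tvol w (heavy_child (A k)) <= volG w / 2%:R].
Proof.
move=> Et; have Hsize : size (dense_branch w t) = k.+1 by rewrite Et size_mkseq.
have Hdrop i : (i <= k)%N -> drop i.+1 (mkseq A k.+1) = dense_tail (A i).
  by move=> Hi; rewrite -Et (drop_dense_branch t) ?Hsize // Et nth_mkseq.
split.
- by have [] := dense_branch_cons Et.
- move=> i Hi; apply: (@dense_tail_cons _ _ (drop i.+2 (mkseq A k.+1))).
  by rewrite -(Hdrop i (ltnW Hi)) (drop_nth t) ?size_mkseq // nth_mkseq.
- move=> l r EAk; apply: dense_branch_nil; rewrite EAk.
  have := Hdrop k (leqnn k); rewrite drop_oversize ?size_mkseq // EAk.
  by move/esym.
Qed.

End DenseBranch.

Section Cuts.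
Variables (R : realFieldType) (V : finType) (w : V -> V -> R).
Hypothesis w_ge0 : forall u v, 0 <= w u v.

Lemma deg_ge0 u : 0 <= deg w u.
Proof. exact: sumr_ge0. Qed.

Lemma vol_ge0 S : 0 <= vol w S.
Proof. by apply: sumr_ge0 => u _; apply: deg_ge0. Qed.

Lemma vol_le_volG S : vol w S <= volG w.
Proof.
rewrite /volG /vol [leLHS]big_mkcond [leRHS]big_mkcond; apply: ler_sum => u _.
by rewrite in_setT; case: ifP => // _; apply: deg_ge0.
Qed.

Lemma tvol_leafset t : uniq (leaves t) -> tvol w t = vol w (leafset t).
Proof. by move=> Ut; rewrite /tvol /vol big_uniq //; apply: eq_bigl => x; rewrite inE. Qed.

Lemma cutwE S : cutw w S =
  \sum_u \sum_v (if (u \in S) && (v \notin S) then w u v else 0).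
Proof.
rewrite /cutw big_mkcond; apply: eq_bigr => u _ /=; rewrite big_mkcond.
by case: (u \in S) => /=; [apply: eq_bigr => v _; rewrite inE | rewrite big1].
Qed.

Lemma cutw_ge0 S : 0 <= cutw w S.
Proof. by rewrite cutwE; do 2 (apply: sumr_ge0 => ? _); case: ifP. Qed.

Lemma cutw_le_vol S : cutw w S <= vol w S.
Proof.
rewrite cutwE /vol [leRHS]big_mkcond; apply: ler_sum => u _.
case: (u \in S) => /=; last by rewrite big1.
by apply: ler_sum => v _; case: ifP.
Qed.

Lemma conductance_mul_vol_le_cut phi S :
  is_conductance w phi -> cond_admissible w S -> phi * vol w S <= cutw w S.
Proof.
case=> _ /[apply]; rewrite /cond_set.
have [->|vol_gt0] := eqVneq (vol w S) 0; first by rewrite mulr0 cutw_ge0.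
by rewrite ler_pdivlMr // lt_def vol_gt0 vol_ge0.
Qed.

Lemma conductance_le1 phi : is_conductance w phi -> phi <= 1.
Proof.
case=> [[S [_ ->]] _]; rewrite /cond_set.
have [->|vol_gt0] := eqVneq (vol w S) 0; first by rewrite invr0 mulr0.
by rewrite ler_pdivrMr ?mul1r ?cutw_le_vol // lt_def vol_gt0 vol_ge0.
Qed.

(* Each ordered pair (u, v) crosses at most one of the disjoint sets [S j]. *)
Lemma sum_cutw_le (I : eqType) (r : seq I) (S : I -> {set V}) (c : I -> R)
    (L : V -> V -> R) :
  uniq r -> (forall u v, 0 <= L u v) ->
  (forall j j', j \in r -> j' \in r -> j != j' -> [disjoint S j & S j']) ->
  (forall j u v, j \in r -> u \in S j -> v \notin S j -> c j <= L u v) ->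
  \sum_(j <- r) c j * cutw w (S j) <= \sum_u \sum_v w u v * L u v.
Proof.
move=> Ur L_ge0 S_disj c_le.
under eq_bigr => j _ do rewrite cutwE mulr_sumr.
rewrite exchange_big /=; apply: ler_sum => u _.
under eq_bigr => j _ do rewrite mulr_sumr.
rewrite exchange_big /=; apply: ler_sum => v _.
have -> : \sum_(j <- r) c j * (if (u \in S j) && (v \notin S j) then w u v else 0)
  = w u v * \sum_(j <- r) (if (u \in S j) && (v \notin S j) then c j else 0).
  by rewrite mulr_sumr; apply: eq_bigr => j _; case: ifP; rewrite ?mulr0 // mulrC.
apply: ler_wpM2l => //.
have [/hasP [j0 j0r /andP [Hu Hv]]|/hasPn none] :=
  boolP (has (fun j => (u \in S j) && (v \notin S j)) r).
- rewrite (bigD1_seq j0) //= Hu Hv /= big_seq_cond big1 ?addr0; first exact: c_le.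
  move=> j /andP [jr Ej]; case: ifP => // /andP [Huj _].
  by move: Hu; rewrite (disjointFr (S_disj _ _ jr j0r Ej) Huj).
- by rewrite big_seq big1 // => j /none /negbTE ->.
Qed.

End Cuts.

Section TreeCost.
Variables (R : realFieldType) (V : finType) (w : V -> V -> R).
Hypotheses (w_ge0 : forall u v, 0 <= w u v) (w_diag : forall u, w u u = 0).

Lemma costE T : cost w T = 2%:R^-1 * \sum_u \sum_v w u v * (lca_size T u v)%:R.
Proof.
congr (_ * _); apply: eq_bigr => u _.
by rewrite [RHS](bigD1 u) //= w_diag mul0r add0r.
Qed.

Lemma half_mul_le_cost phi X T :
  phi * X <= \sum_u \sum_v w u v * (lca_size T u v)%:R ->
  phi / 2%:R * X <= cost w T.
Proof.
by move=> H; rewrite costE mulrAC mulrC ler_wpM2l // invr_ge0 ler0n.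
Qed.

Lemma cost_ge_deg phi T x :
  is_conductance w phi -> phi / 2%:R * deg w x <= cost w T.
Proof.
move=> phi_cond; apply: half_mul_le_cost.
apply: (@le_trans _ _ (deg w x)).
  rewrite -[leRHS]mul1r; apply: ler_wpM2r; first exact: deg_ge0.
  exact: conductance_le1 phi_cond.
rewrite (bigD1 x) //= -[leLHS]addr0 lerD //.
- by apply: ler_sum => v _; rewrite ler_peMr // ler1n lca_size_gt0.
- by do 2 (apply: sumr_ge0 => ? _); rewrite mulr_ge0.
Qed.

Lemma cost_ge_child_vols (I : eqType) (r : seq I) (C N : I -> hctree V) phi T :
  is_conductance w phi -> uniq r -> uniq (leaves T) ->
  (forall j, j \in r -> subtree (N j) T /\ child (C j) (N j)) ->
  (forall j, j \in r -> cond_admissible w (leafset (C j))) ->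
  (forall j j', j \in r -> j' \in r -> j != j' ->
     [disjoint leafset (C j) & leafset (C j')]) ->
  phi / 2%:R * \sum_(j <- r) (nleaves (N j))%:R * tvol w (C j) <= cost w T.
Proof.
move=> phi_cond Ur UT NC C_adm C_disj; apply: half_mul_le_cost.
apply: le_trans (sum_cutw_le w_ge0 (c := fun j => (nleaves (N j))%:R)
  (L := fun u v => (lca_size T u v)%:R) Ur _ C_disj _) => //.
- rewrite mulr_sumr big_seq [leRHS]big_seq; apply: ler_sum => j jr.
  have [NT /subtree_child CN] := NC j jr.
  rewrite mulrCA ler_wpM2l // tvol_leafset //.
    exact: conductance_mul_vol_le_cut phi_cond (C_adm j jr).
  exact: subtree_uniq CN (subtree_uniq NT UT).
- move=> j u v jr; rewrite !inE => Hu Hv; rewrite ler_nat.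
  by have [NT CN] := NC j jr; apply: nleaves_le_lca_size NT CN Hu Hv.
Qed.

Lemma cond_admissible_leafset c s :
  uniq (leaves c) -> [disjoint leafset c & leafset s] ->
  tvol w c <= volG w / 2%:R -> cond_admissible w (leafset c).
Proof.
move=> Uc cs_disj c_small; apply/and3P; split; first exact: leafset_neq0.
- rewrite properT; apply: contraTneq cs_disj => ->.
  by rewrite -setI_eq0 setTI leafset_neq0.
- by rewrite -tvol_leafset.
Qed.

End TreeCost.

Section DenseBranchBounds.
Variables (R : realFieldType) (V : finType) (w : V -> V -> R) (phi : R).
Variables (T : hctree V) (k : nat) (A B : nat -> hctree V).
Hypotheses (w_ge0 : forall u v, 0 <= w u v) (w_diag : forall u, w u u = 0).
Hypotheses (phi_cond : is_conductance w phi) (T_hc : is_hc_tree T).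
Hypothesis T_dense : dense_branch w T = mkseq A k.+1.
Hypothesis B_sibling : forall i, (1 <= i <= k)%N ->
  A i.-1 = Node (A i) (B i) \/ A i.-1 = Node (B i) (A i).

Lemma uniq_leaves_T : uniq (leaves T).
Proof. by rewrite (perm_uniq T_hc) enum_uniq. Qed.

Lemma A_subtree i j : (i <= j <= k)%N -> subtree (A j) (A i).
Proof.
have [_ A_heavy _] := dense_branch_mkseq T_dense.
elim: j => [|j IH]; first by rewrite leqn0 => /andP [/eqP -> _]; apply: subtree_refl.
rewrite leq_eqVlt => /andP [/orP [/eqP <-|ij] jk]; first exact: subtree_refl.
apply: subtree_trans (IH _) _; first by rewrite -ltnS ij (ltnW jk).
by rewrite A_heavy //; apply: subtree_heavy_child.
Qed.

Lemma A_subtree_T i : (i <= k)%N -> subtree (A i) T.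
Proof. by have [<- _ _] := dense_branch_mkseq T_dense; move=> ik; apply: A_subtree. Qed.

Lemma uniq_leaves_A i : (i <= k)%N -> uniq (leaves (A i)).
Proof. by move=> ik; apply: subtree_uniq (A_subtree_T ik) uniq_leaves_T. Qed.

Lemma B_child i : (1 <= i <= k)%N -> child (B i) (A i.-1).
Proof. by move/B_sibling => [E|E]; exists (A i); [right|left]. Qed.

Lemma disjoint_B_A i : (1 <= i <= k)%N -> [disjoint leafset (B i) & leafset (A i)].
Proof.
move=> Hi; apply: disjoint_leaves_child (uniq_leaves_A (_ : i.-1 <= k)%N) _; first lia.
by case: (B_sibling Hi) => E; [right|left].
Qed.

Lemma disjoint_B_lt i j : (1 <= i)%N -> (i < j <= k)%N ->
  [disjoint leafset (B i) & leafset (B j)].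
Proof.
move=> i_gt0 /andP [ij jk]; have Hi : (1 <= i <= k)%N by lia.
have Hj : (1 <= j <= k)%N by lia.
apply: disjointWr (disjoint_B_A Hi); apply: leafset_sub.
apply: subtree_trans (A_subtree (_ : i <= j.-1 <= k)%N) (subtree_child (B_child Hj)).
lia.
Qed.

Lemma tvol_B_le_half i : (1 <= i <= k)%N -> tvol w (B i) <= volG w / 2%:R.
Proof.
move=> Hi; have [_ A_heavy _] := dense_branch_mkseq T_dense.
have BA : tvol w (B i) <= tvol w (A i).
  have -> : A i = heavy_child w (A i.-1) by rewrite -A_heavy ?prednK //; lia.
  by apply: (@tvol_le_heavy_child _ _ w (A i)); case: (B_sibling Hi) => E; [left|right].
have : tvol w (A i.-1) <= volG w.
  by rewrite tvol_leafset ?vol_le_volG ?uniq_leaves_A //; lia.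
by case: (B_sibling Hi) => ->; rewrite tvol_node; lra.
Qed.

Lemma cost_ge_siblings :
  phi / 2%:R * \sum_(1 <= i < k.+1) (nleaves (A i.-1))%:R * tvol w (B i)
    <= cost w T.
Proof.
have mem_iota i : (i \in index_iota 1 k.+1) = (1 <= i <= k)%N.
  by rewrite mem_index_iota ltnS.
apply: cost_ge_child_vols uniq_leaves_T _ _ _ => //.
- exact: iota_uniq.
- move=> i; rewrite mem_iota => Hi; split; last exact: B_child.
  by apply: A_subtree_T; lia.
- move=> i; rewrite mem_iota => Hi.
  apply: cond_admissible_leafset (disjoint_B_A Hi) (tvol_B_le_half Hi).
  by apply: subtree_uniq (subtree_child (B_child Hi)) (uniq_leaves_A _); lia.
- move=> i j; rewrite !mem_iota neq_ltn => Hi Hj /orP [] ij.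
    by apply: disjoint_B_lt; lia.
  by rewrite disjoint_sym; apply: disjoint_B_lt; lia.
Qed.

Lemma cost_ge_last :
  phi / 2%:R * (nleaves (A k))%:R * tvol w (A k) <= cost w T.
Proof.
have [_ _ last_light] := dense_branch_mkseq T_dense.
have := uniq_leaves_A (leqnn k); have := A_subtree_T (leqnn k).
case: (A k) last_light => [x|l r] last_light AkT UA.
  by rewrite /tvol /= big_seq1 mulr1; apply: cost_ge_deg.
have light := last_light l r erefl.
have [Ul Ur] := uniq_leaves_node UA.
have D := disjoint_leaves_node UA.
rewrite -mulrA.
have -> : (nleaves (Node l r))%:R * tvol w (Node l r) =
    \sum_(b <- [:: true; false]) (nleaves (Node l r))%:R * tvol w (if b then l else r).
  by rewrite tvol_node big_cons big_seq1 mulrDr.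
apply: (@cost_ge_child_vols _ _ _ w_ge0 w_diag _ _ _ (fun _ => Node l r)) => //.
- exact: uniq_leaves_T.
- by move=> [] _; split=> //; [exists r; left | exists l; right].
- move=> [] _.
    apply: cond_admissible_leafset Ul D _.
    by apply: le_trans (tvol_le_heavy_child w (or_intror erefl)) light.
  rewrite disjoint_sym in D; apply: cond_admissible_leafset Ur D _.
  by apply: le_trans (tvol_le_heavy_child w (or_introl erefl)) light.
- by move=> [] [] //= _ _ _; rewrite disjoint_sym.
Qed.

End DenseBranchBounds.

Theorem mainTheorem4 (R : realFieldType) (V : finType) (w : V -> V -> R)
    (phi : R) (T : hctree V) (k : nat) (A B : nat -> hctree V) :
  (1 < #|V|)%N ->
  (forall u, w u u = 0) ->
  (forall u v, w u v = w v u) ->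
  (forall u v, 0 <= w u v) ->
  is_conductance w phi ->
  is_hc_tree T ->
  dense_branch w T = mkseq A k.+1 ->
  (forall i, (1 <= i <= k)%N ->
     A i.-1 = Node (A i) (B i) \/ A i.-1 = Node (B i) (A i)) ->
  phi / 2%:R * \sum_(1 <= i < k.+1) (nleaves (A i.-1))%:R * tvol w (B i)
    <= cost w T
  /\ phi / 2%:R * (nleaves (A k))%:R * tvol w (A k) <= cost w T.
Proof.
(* [cost] sums over ordered pairs. *)
move=> _ w_diag _ w_ge0 phi_cond T_hc T_dense B_sibling; split.
- exact: cost_ge_siblings w_ge0 w_diag phi_cond T_hc T_dense B_sibling.
- exact: cost_ge_last w_ge0 w_diag phi_cond T_hc T_dense.
Qed.
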